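(* Let $A,B\subseteq V$ be disjoint and $O_A,O_B$ operators on the physical sites of $A$ and $B$ respectively. Assume $Z^X_{BP}\neq0$ for $X\in\{\emptyset,A,B,AB\}$, $\langle O_A\rangle,\langle O_B\rangle\ne0$, and that for each such $X$ the cluster expansion $\log\mathcal Z^X=\log Z^X_{BP}+\sum_{\mathbf W\text{ connected over }\mathcal L_{AB}}\phi(\mathbf W)Z^X_{\mathbf W}$ holds with an absolutely convergent series (with consistent choices of logarithm). Then the connected correlator $\langle O_AO_B\rangle_c:=\langle O_AO_B\rangle-\langle O_A\rangle\langle O_B\rangle$ satisfies $$\langle O_AO_B\rangle_c=\langle O_A\rangle\langle O_B\rangle\left[\exp\Bigg\{\sum_{\substack{\mathbf W\text{ connected over }\mathcal L_{AB}\\ \mathrm{supp}(\mathbf W)\cap A\ne\emptyset,\ \mathrm{supp}(\mathbf W)\cap B\ne\emptyset}}\phi(\mathbf W)\big(Z^{AB}_{\mathbf W}+Z_{\mathbf W}-Z^A_{\mathbf W}-Z^B_{\mathbf W}\big)\Bigg\}-1\right].$$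
   Context: Let $|\psi\rangle$ be a PEPS on a finite graph $G=(V,E)$; $\mathcal Z=\langle\psi|\psi\rangle>0$ is the norm network. For $X\in\{A,B,AB\}$, $\mathcal Z^X$ is the network for $\langle\psi|O_X|\psi\rangle$ with $O_X=O_A$, $O_B$, $O_AO_B$ respectively (operators inserted at the corresponding sites, tensors unchanged elsewhere); $\mathcal Z^\emptyset=\mathcal Z$. Expectations: $\langle O_X\rangle=\mathcal Z^X/\mathcal Z$. Fix a BP fixed point of $\mathcal Z$ (messages $\mu_{v\to w}$ with $I_{vw}=\mu_{v\to w}\star\mu_{w\to v}\ne0$, each vertex tensor contracted with all incoming messages except from $w$ proportional to $\mu_{v\to w}$), used for all networks; $\mathcal P^\perp_{vw}=\mathbb 1-\mu_{v\to w}\otimes\mu_{w\to v}/I_{vw}$. For $F\subseteq E$, $\tilde Z^X_F$ is the contraction of $\mathcal Z^X$ with $\mathcal P^\perp$ on edges in $F$ and $\mu\otimes\mu/I$ elsewhere; $Z^X_{BP}=\tilde Z^X_\emptyset$. $\mathcal L_{AB}$: connected subgraphs of $G$ with at least one edge in which every vertex not in $A\cup B$ has degree $\ge2$; supports are vertex sets; weights $Z^X_l=\tilde Z^X_{E(l)}/Z^X_{BP}$ (no superscript = $\mathcal Z$). Compatible = vertex-disjoint. Clusters $\mathbf W=\{(l_i,\eta_i)\}$ are finite multisets over $\mathcal L_{AB}$ with $Z^X_{\mathbf W}=\prod(Z^X_{l_i})^{\eta_i}$, $\mathrm{supp}(\mathbf W)=\bigcup\mathrm{supp}(l_i)$; interaction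 graph: $\eta_i$ vertices per $l_i$, adjacent iff equal or incompatible; connected if it is connected. Ursell function $\phi(\mathbf W)=\frac1{\prod\eta_i!}\sum_C(-1)^{|E(C)|}$ over connected spanning subgraphs $C$ of the interaction graph. *)

From HB Require Import structures.
From mathcomp Require Import all_boot all_order all_algebra.
From mathcomp Require Import complex.
From mathcomp Require Import reals topology normedtype sequences exp trigo.
From mathcomp Require Import classical_sets filter.
From mathcomp Require Import finset.


Unset Strict Implicit.
Unset Printing Implicit Defensive.

Import Order.TTheory GRing.Theory Num.Theory.
Import numFieldNormedType.Exports.
Local Open Scope ring_scope.

Definition gconnected {T : finType} (S : {set T}) (C : {set {set T}}) : bool :=
  (S != set0) &&
  [forall U : {set T}, ((U \proper S) && (U != set0)) ==>
     [exists e in C, (e :&: U != set0) && (e :&: (S :\: U) != set0)]].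

(* The finite graph G = (V, E).  Each edge e has endpoints src e, dst e *)
(* (the orientation is pure bookkeeping).                               *)
Section Graph.
Context {V E : finType}.
Variables (src dst : E -> V).

Definition simple_graph : Prop :=
  (forall e, src e != dst e) /\
  (forall e e', [set src e; dst e] = [set src e'; dst e'] -> e = e').

Definition incident (v : V) (e : E) : bool := (src e == v) || (dst e == v).

Definition Inc (v : V) := {e : E | incident v e}.

Definition vset (F : {set E}) : {set V} := [set v | [exists e in F, incident v e]].

Definition eimg (F : {set E}) : {set {set V}} := [set [set src e; dst e] | e in F].

Definition deg (F : {set E}) (v : V) : nat := #|[set e in F | incident v e]|.

(* L_AB: connected subgraphs with >= 1 edge (identified with their edge   *)
(* sets) in which every vertex outside A u B has degree >= 2.            *)
Definition inL (A B : {set V}) (F : {set E}) : bool :=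
  [&& F != set0, gconnected (vset F) (eimg F) &
      [forall v in vset F :\: (A :|: B), (1 < deg F v)%N]].

(* Clusters: finite multisets over L_AB, as multiplicity functions.      *)
Definition cluster := {ffun {set E} -> nat}.

Definition is_cluster (A B : {set V}) (W : cluster) : bool :=
  [forall F, (0 < W F)%N ==> inL A B F].

Definition csize (W : cluster) : nat := (\sum_F W F)%N.

Definition csupp (W : cluster) : {set V} := \bigcup_(F | (0 < W F)%N) vset F.

(* Interaction graph: eta_i vertices (l_i, k), k < eta_i, per l_i;       *)
(* adjacent iff equal or incompatible (= not vertex-disjoint).           *)
Definition IV (n : nat) (W : cluster) : {set ({set E} * 'I_n)} :=
  [set p : ({set E} * 'I_n) | (p.2 < W p.1)%N].

Definition IE (n : nat) (W : cluster) : {set {set ({set E} * 'I_n)}} :=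
  [set e | [exists p : ({set E} * 'I_n), exists q : ({set E} * 'I_n),
     [&& e == [set p; q], p != q, p \in IV n W, q \in IV n W &
         (p.1 == q.1) || ~~ [disjoint vset p.1 & vset q.1]]]].

Definition cl_connected (W : cluster) : bool :=
  gconnected (IV (csize W).+1 W) (IE (csize W).+1 W).

Definition ursell {K : fieldType} (W : cluster) : K :=
  (\prod_F ((W F)`!)%:R)^-1 *
  \sum_(Cs : {set {set ({set E} * 'I_(csize W).+1)}} |
          (Cs \subset IE (csize W).+1 W) && gconnected (IV (csize W).+1 W) Cs)
     (-1) ^+ #|Cs|.

Definition clweight {K : fieldType} (z : {set E} -> K) (W : cluster) : K :=
  \prod_F z F ^+ W F.

(* Partial sums of a cluster series over the clusters satisfying P, taken *)
(* over all clusters of total size <= N (each exactly once).            *)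
Definition cnat {N : nat} (W : {ffun {set E} -> 'I_N.+1}) : cluster :=
  [ffun F => nat_of_ord (W F)].

Definition psum {K : fieldType} (P : pred cluster) (t : cluster -> K) (N : nat) : K :=
  \sum_(W : {ffun {set E} -> 'I_N.+1} | (csize (cnat W) <= N)%N && P (cnat W))
     t (cnat W).

End Graph.

Section Cplx.
Context {R : realType}.

Definition cexp (z : R[i]) : R[i] :=
  Complex (expR (complex.Re z) * cos (complex.Im z)) (expR (complex.Re z) * sin (complex.Im z)).

Local Open Scope classical_set_scope.
Definition ccvg (u : nat -> R[i]) (l : R[i]) : Prop :=
  ((fun n => complex.Re (u n)) @ \oo --> complex.Re l) /\ ((fun n => complex.Im (u n)) @ \oo --> complex.Im l).

Local Close Scope classical_set_scope.
End Cplx.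

Section PEPS.
Context {R : realType} {V E : finType}.
Variables (src dst : E -> V).
Variables (Phys : V -> finType) (Bnd : E -> finType).

Local Notation C := R[i].

(* double-layer bond index on edge e : (ket index, bra index) *)
Definition Kb (e : E) : finType := (Bnd e * Bnd e)%type.

Definition Lcfg (v : V) := {dffun forall e : Inc src dst v, Bnd (val e)}.
Definition LKcfg (v : V) := {dffun forall e : Inc src dst v, Kb (val e)}.

Definition PC := {dffun forall v : V, Phys v}.
(* half-edge configurations (one double-layer index per edge side) *)
Definition HC := {dffun forall e : E, Kb e}.

Definition localize (hL hR : HC) (v : V) : LKcfg v :=
  [ffun e : Inc src dst v => if src (val e) == v then hL (val e) else hR (val e)].

Definition kpart {v : V} (x : LKcfg v) : Lcfg v := [ffun e : Inc src dst v => (x e).1].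
Definition bpart {v : V} (x : LKcfg v) : Lcfg v := [ffun e : Inc src dst v => (x e).2].

Variable Aten : forall v : V, Phys v -> Lcfg v -> C.

(* contraction of the double-layer network for <psi|O|psi> where each    *)
(* edge e carries the matrix M e (x_src, x_dst) (identity = plain net)   *)
Definition Znet (O : PC -> PC -> C) (M : forall e : E, Kb e -> Kb e -> C) : C :=
  \sum_(s : PC) \sum_(s' : PC) O s s' *
   \sum_(hL : HC) \sum_(hR : HC)
     ((\prod_e M e (hL e) (hR e)) *
      \prod_v ((Aten v (s v) (bpart (localize hL hR v)))^* *
               Aten v (s' v) (kpart (localize hL hR v)))).

Definition delta (e : E) (x y : Kb e) : C := (x == y)%:R.

(* operators on physical configurations: matrix elements <s|O|s'> *)
Definition op_id (s s' : PC) : C := (s == s')%:R.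
Definition op_mul (O1 O2 : PC -> PC -> C) (s s' : PC) : C := \sum_t O1 s t * O2 t s'.

Definition LPC (A : {set V}) := {dffun forall v : {v : V | v \in A}, Phys (val v)}.
Definition restr (A : {set V}) (s : PC) : LPC A :=
  [ffun v : {v : V | v \in A} => s (val v)].
Definition ext_op (A : {set V}) (o : LPC A -> LPC A -> C) (s s' : PC) : C :=
  o (restr A s) (restr A s') * \prod_(v | v \notin A) (s v == s' v)%:R.

Definition Znw (O : PC -> PC -> C) : C := Znet O delta.

(* BP messages: mu e true = mu_{src e -> dst e}, mu e false = mu_{dst e -> src e} *)
Variable mu : forall e : E, bool -> Kb e -> C.

Definition Ie (e : E) : C := \sum_(x : Kb e) mu e true x * mu e false x.

(* rank-one BP projector on edge e, as a matrix (x_src, x_dst): the src   *)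
(* leg is contracted with the message coming from dst and vice versa.    *)
Definition Pbp (e : E) (x y : Kb e) : C := mu e false x * mu e true y / Ie e.
Definition Pperp (e : E) (x y : Kb e) : C := (x == y)%:R - Pbp e x y.

Definition edgeM (F : {set E}) (e : E) : Kb e -> Kb e -> C :=
  if e \in F then Pperp e else Pbp e.

Definition Ztilde (O : PC -> PC -> C) (F : {set E}) : C := Znet O (edgeM F).
Definition ZBP (O : PC -> PC -> C) : C := Ztilde O set0.
Definition Zloop (O : PC -> PC -> C) (F : {set E}) : C := Ztilde O F / ZBP O.

Definition Tv {v : V} (x : LKcfg v) : C :=
  \sum_(s : Phys v) (Aten v s (bpart x))^* * Aten v s (kpart x).

Definition inmsg {v : V} (e : Inc src dst v) : Kb (val e) -> C :=
  if src (val e) == v then mu (val e) false else mu (val e) true.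
Definition outmsg {v : V} (e : Inc src dst v) : Kb (val e) -> C :=
  if src (val e) == v then mu (val e) true else mu (val e) false.

Definition BP_fixed_point : Prop :=
  (forall e, Ie e != 0) /\
  forall (v : V) (e0 : Inc src dst v), exists c : C, forall y : Kb (val e0),
    \sum_(x : LKcfg v | x e0 == y) (Tv x * \prod_(e | e != e0) inmsg e (x e))
    = c * outmsg e0 y.

Definition clterm (O : PC -> PC -> C) (W : @cluster E) : C :=
  ursell src dst W * clweight (Zloop O) W.

Definition conn_cl (A B : {set V}) : pred (@cluster E) :=
  fun W => is_cluster src dst A B W && cl_connected src dst W.

(* the hypothesis: log Z^X = log Z^X_BP + sum_W phi(W) Z^X_W, absolutely  *)
(* convergent; i.e. Z^X = Z^X_BP * exp(sum), with the series absolutely   *)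
(* convergent (bounded partial sums of moduli).                           *)
Definition cluster_expansion (A B : {set V}) (O : PC -> PC -> C) : Prop :=
  (exists M : C, forall N, psum (conn_cl A B) (fun W => `|clterm O W|) N <= M) /\
  exists S : C, ccvg (psum (conn_cl A B) (clterm O)) S /\ Znw O = ZBP O * cexp S.

Definition expect (O : PC -> PC -> C) : C := Znw O / Znw op_id.

Definition corr_term (OA OB : PC -> PC -> C) (W : @cluster E) : C :=
  ursell src dst W *
  (clweight (Zloop (op_mul OA OB)) W + clweight (Zloop op_id) W
   - clweight (Zloop OA) W - clweight (Zloop OB) W).

Definition conn_cl_AB (A B : {set V}) : pred (@cluster E) :=
  fun W => [&& conn_cl A B W, ~~ [disjoint csupp src dst W & A] &
                              ~~ [disjoint csupp src dst W & B]].

End PEPS.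

(* Take two copies of a network pair and exchange their configurations on a
   region D (vertices of D and half-edges ending in D) that a loop F avoids.
   On every edge with an endpoint in D both networks carry the rank-one BP
   projector mu (x) mu / I, whose two legs may be exchanged independently, so
   the product of the two integrands is preserved as soon as the inserted
   operators factor as (part on D) (x) (part off D) and are exchanged
   accordingly.  This gives Z~^X_F Z^Y_BP = Z~^X'_F Z^Y'_BP; in particular
   Z^AB_BP Z_BP = Z^A_BP Z^B_BP, and for a loop l avoiding A we get
   Z^AB_l = Z^B_l and Z^A_l = Z_l (symmetrically for B).  Hence clusters
   whose support misses A or B drop out of Z^AB_W + Z_W - Z^A_W - Z^B_W, and
   the four cluster expansions combine into
   <O_A O_B> / (<O_A><O_B>) = Z^AB Z / (Z^A Z^B) = exp(T). *)

From Pilot Require Import Defs.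
From mathcomp Require Import all_boot all_order all_algebra.
From mathcomp Require Import complex.
From mathcomp Require Import reals topology normedtype exp trigo.
From mathcomp Require Import ring.
Import Order.TTheory GRing.Theory Num.Theory.
Import numFieldNormedType.Exports.
Local Open Scope ring_scope.

Definition splice {I : finType} {T : I -> Type} (P : pred I)
    (a b : {dffun forall i, T i}) : {dffun forall i, T i} :=
  [ffun i => if P i then a i else b i].

Lemma spliceK {I : finType} {T : I -> Type} (P : pred I) (a b : {dffun forall i, T i}) :
  splice P (splice P a b) (splice P b a) = a.
Proof. by apply/ffunP => i; rewrite !ffunE; case: (P i). Qed.

Section NetworkSwap.
Context {R : realType} {V E : finType} {src dst : E -> V}
  {Phys : V -> finType} {Bnd : E -> finType}
  {Aten : forall v : V, Phys v -> Lcfg src dst Bnd v -> R[i]}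
  {mu : forall e : E, bool -> Kb Bnd e -> R[i]}.

Local Notation C := R[i].
Local Notation PC := (PC Phys).
Local Notation HC := (HC Bnd).
Local Notation cfg := (PC * PC * HC * HC)%type.
Local Notation spliceV D := (splice (fun v : V => v \in D)).
Local Notation spliceS D := (splice (fun e : E => src e \in D)).
Local Notation spliceD D := (splice (fun e : E => dst e \in D)).
Local Notation localize := (localize src dst Bnd).

Definition vtensor (v : V) (a b : Phys v) (x : LKcfg src dst Bnd v) : C :=
  (Aten v a (bpart src dst Bnd x))^* * Aten v b (kpart src dst Bnd x).

Definition integrand (O : PC -> PC -> C) (M : forall e : E, Kb Bnd e -> Kb Bnd e -> C)
    (x : cfg) : C :=
  let: (s, s', hL, hR) := x in
  O s s' * ((\prod_e M e (hL e) (hR e)) * \prod_v vtensor v (s v) (s' v) (localize hL hR v)).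

Lemma Znet_integrand O M :
  Znet src dst Phys Bnd Aten O M = \sum_(x : cfg) integrand O M x.
Proof.
have -> : \sum_(x : cfg) integrand O M x =
    \sum_s \sum_s' \sum_hL \sum_hR integrand O M (s, s', hL, hR).
  by rewrite !pair_big /=; apply: eq_bigr => -[[[]]].
apply: eq_bigr => s _; apply: eq_bigr => s' _.
by rewrite mulr_sumr; apply: eq_bigr => hL _; rewrite mulr_sumr.
Qed.

(* hL e and hR e sit on the src and dst halves of edge e, so each half-edge
   is exchanged according to its own endpoint. *)
Definition cfg_swap (D : {set V}) (p : cfg * cfg) : cfg * cfg :=
  let: ((s, s', hL, hR), (t, t', kL, kR)) := p in
  ((spliceV D t s, spliceV D t' s', spliceS D kL hL, spliceD D kR hR),
   (spliceV D s t, spliceV D s' t', spliceS D hL kL, spliceD D hR kR)).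

Lemma cfg_swapK D : involutive (cfg_swap D).
Proof. by case=> -[[[s s'] hL] hR] [[[t t'] kL] kR] /=; rewrite !spliceK. Qed.

Lemma localize_splice (D : {set V}) (hL hR kL kR : HC) v :
  localize (spliceS D kL hL) (spliceD D kR hR) v
  = if v \in D then localize kL kR v else localize hL hR v.
Proof.
have dst_v (e : Inc src dst v) : src (val e) != v -> dst (val e) = v.
  by have := valP e; rewrite /incident => /orP [/eqP -> /eqP | /eqP ->].
case: ifP => vD; apply/ffunP => e; rewrite /localize !ffunE;
  by case: ifP => [/eqP -> | /negbT /dst_v ->]; rewrite vD.
Qed.

Lemma Pbp_exchange e x y x' y' :
  Pbp Bnd mu e x y * Pbp Bnd mu e x' y' = Pbp Bnd mu e x' y * Pbp Bnd mu e x y'.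
Proof. rewrite /Pbp; ring. Qed.

Lemma notin_loop {F : {set E}} {D : {set V}} {e : E} :
  [disjoint vset src dst F & D] -> (src e \in D) || (dst e \in D) -> e \notin F.
Proof.
move=> dFD; apply: contraTN => eF.
have incF w : incident src dst w e -> w \in vset src dst F.
  by move=> ?; rewrite inE; apply/existsP; exists e; apply/andP.
by rewrite !(disjointFr dFD) // incF // /incident eqxx ?orbT.
Qed.

Lemma edge_factors_swap {F : {set E}} {D : {set V}} (hL hR kL kR : HC) :
  [disjoint vset src dst F & D] ->
  (\prod_e edgeM Bnd mu F e (hL e) (hR e)) * \prod_e edgeM Bnd mu set0 e (kL e) (kR e) =
  (\prod_e edgeM Bnd mu F e (spliceS D kL hL e) (spliceD D kR hR e)) *
  \prod_e edgeM Bnd mu set0 e (spliceS D hL kL e) (spliceD D hR kR e).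
Proof.
move=> dFD; rewrite -!big_split /=; apply: eq_bigr => e _; rewrite !ffunE.
case: (boolP ((src e \in D) || (dst e \in D))) => [eD | ]; last first.
  by rewrite negb_or => /andP [/negbTE -> /negbTE ->].
rewrite /edgeM (negbTE (notin_loop dFD eD)) inE.
move: eD; case: (src e \in D); case: (dst e \in D) => // _.
- exact: mulrC.
- exact: Pbp_exchange.
- by rewrite Pbp_exchange mulrC.
Qed.

Lemma vertex_factors_swap (D : {set V}) (s s' t t' : PC) (hL hR kL kR : HC) :
  (\prod_v vtensor v (s v) (s' v) (localize hL hR v)) *
    \prod_v vtensor v (t v) (t' v) (localize kL kR v) =
  (\prod_v vtensor v (spliceV D t s v) (spliceV D t' s' v)
     (localize (spliceS D kL hL) (spliceD D kR hR) v)) *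
  \prod_v vtensor v (spliceV D s t v) (spliceV D s' t' v)
     (localize (spliceS D hL kL) (spliceD D hR kR) v).
Proof.
rewrite -!big_split /=; apply: eq_bigr => v _; rewrite !localize_splice !ffunE.
by case: ifP; rewrite // mulrC.
Qed.

Lemma Ztilde_swap (D : {set V}) (F : {set E}) (O1 O2 O3 O4 : PC -> PC -> C) :
  [disjoint vset src dst F & D] ->
  (forall s s' t t' : PC, O1 s s' * O2 t t' =
     O3 (spliceV D t s) (spliceV D t' s') * O4 (spliceV D s t) (spliceV D s' t')) ->
  Ztilde src dst Phys Bnd Aten mu O1 F * ZBP src dst Phys Bnd Aten mu O2 =
  Ztilde src dst Phys Bnd Aten mu O3 F * ZBP src dst Phys Bnd Aten mu O4.
Proof.
move=> dFD hO; rewrite /ZBP /Ztilde !Znet_integrand !mulr_suml.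
under eq_bigr do rewrite mulr_sumr.
under [RHS]eq_bigr do rewrite mulr_sumr.
rewrite !pair_big [RHS](reindex_inj (inv_inj (cfg_swapK D))) /=.
apply: eq_bigr => -[[[[s s'] hL] hR] [[[t t'] kL] kR]] _ /=.
transitivity ((O1 s s' * O2 t t') *
  ((\prod_e edgeM Bnd mu F e (hL e) (hR e)) * \prod_e edgeM Bnd mu set0 e (kL e) (kR e)) *
  ((\prod_v vtensor v (s v) (s' v) (localize hL hR v)) *
     \prod_v vtensor v (t v) (t' v) (localize kL kR v))); first by ring.
rewrite hO (edge_factors_swap hL hR kL kR dFD) (vertex_factors_swap D); ring.
Qed.

End NetworkSwap.

Section LocalOperators.
Context {R : realType} {V : finType} {Phys : V -> finType}.

Local Notation C := R[i].
Local Notation PC := (PC Phys).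
Local Notation spliceV D := (splice (fun v : V => v \in D)).

Definition delta_on (D : {set V}) (s s' : PC) : C := \prod_(v in D) (s v == s' v)%:R.

Definition op_on (D : {set V}) (o : LPC Phys D -> LPC Phys D -> C) (s s' : PC) : C :=
  o (restr Phys D s) (restr Phys D s').

Definition supported_on (D : {set V}) (f : PC -> PC -> C) : Prop :=
  forall s s' t t' : PC, f (spliceV D s t) (spliceV D s' t') = f s s'.

Lemma delta_on_supported (D : {set V}) : supported_on D (delta_on D).
Proof. by move=> s s' t t'; apply: eq_bigr => v vD; rewrite !ffunE vD. Qed.

Lemma restr_splice_in (D : {set V}) (s t : PC) : restr Phys D (spliceV D s t) = restr Phys D s.
Proof. by apply/ffunP => v; rewrite !ffunE (valP v). Qed.

Lemma restr_splice_out (D D' : {set V}) (s t : PC) :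
  [disjoint D & D'] -> restr Phys D (spliceV D' s t) = restr Phys D t.
Proof. by move=> dD; apply/ffunP => v; rewrite !ffunE (disjointFr dD (valP v)). Qed.

Lemma delta_on_splice_in (D : {set V}) (x y z : PC) :
  delta_on D (spliceV D x y) z = delta_on D x z.
Proof. by apply: eq_bigr => v vD; rewrite ffunE vD. Qed.

Lemma delta_on_splice_out (D D' : {set V}) (x y z : PC) :
  [disjoint D & D'] -> delta_on D (spliceV D' x y) z = delta_on D y z.
Proof. by move=> dD; apply: eq_bigr => v vD; rewrite ffunE (disjointFr dD vD). Qed.

Lemma delta_onC (D : {set V}) (s s' : PC) : delta_on D s s' = delta_on D s' s.
Proof. by apply: eq_bigr => v _; rewrite eq_sym. Qed.

Lemma op_on_supported (D : {set V}) o : supported_on D (op_on D o).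
Proof. by move=> s s' t t'; rewrite /op_on !restr_splice_in. Qed.

Lemma supported_on_disjoint {D D' : {set V}} {f} {s s' t t' : PC} :
  supported_on D f -> [disjoint D & D'] ->
  f (spliceV D' t s) (spliceV D' t' s') = f s s'.
Proof.
move=> fD dDD'.
have out (x y : PC) : spliceV D (spliceV D' x y) y = y.
  by apply/ffunP => v; rewrite !ffunE; case: ifP => // /(disjointFr dDD') ->.
by rewrite -[in RHS](out t s) -[in RHS](out t' s') fD.
Qed.

Lemma delta_onU (D1 D2 : {set V}) (s s' : PC) : [disjoint D1 & D2] ->
  delta_on (D1 :|: D2) s s' = delta_on D1 s s' * delta_on D2 s s'.
Proof. by move=> dD; rewrite /delta_on -bigU //; apply: eq_bigl => v; rewrite !inE. Qed.

Lemma delta_on_refl (D : {set V}) (s : PC) : delta_on D s s = 1.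
Proof. by apply: big1 => v _; rewrite eqxx. Qed.

Lemma delta_on_eq0 {D : {set V}} {s s' : PC} {v : V} : v \in D -> s v != s' v -> delta_on D s s' = 0.
Proof. by move=> vD /negbTE svs'; rewrite /delta_on (bigD1 v) //= svs' mul0r. Qed.

Lemma dffun_neq (s s' : PC) : s != s' -> exists v, s v != s' v.
Proof.
move=> neq; apply/existsP; apply: contraNT neq => /existsPn sv.
by apply/eqP/ffunP => v; apply/eqP/negbNE/sv.
Qed.

Lemma op_id_delta_on (s s' : PC) : op_id Phys s s' = delta_on setT s s'.
Proof.
rewrite /op_id; case: (eqVneq s s') => [->|/dffun_neq [v svs']].
  by rewrite delta_on_refl.
by rewrite (delta_on_eq0 (in_setT v) svs').
Qed.

Lemma ext_op_delta_on (D : {set V}) o (s s' : PC) :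
  ext_op Phys D o s s' = op_on D o s s' * delta_on (~: D) s s'.
Proof. by congr (_ * _); apply: eq_bigl => v; rewrite inE. Qed.

End LocalOperators.

Lemma setC_disjointU {T : finType} {D1 D2 : {set T}} :
  [disjoint D1 & D2] -> ~: D1 = D2 :|: ~: (D1 :|: D2).
Proof.
move=> dD; apply/setP => v; rewrite !inE.
by case: (boolP (v \in D1)) => [/(disjointFr dD) -> | _]; rewrite ?orbN.
Qed.

Lemma disjoint_setC {T : finType} (D D' : {set T}) : D \subset D' -> [disjoint D & ~: D'].
Proof. by rewrite disjoints_subset setCK. Qed.

Section TwoRegions.
Context {R : realType} {V : finType} {Phys : V -> finType} (A B : {set V})
  {oA : LPC Phys A -> LPC Phys A -> R[i]} {oB : LPC Phys B -> LPC Phys B -> R[i]}.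
Hypothesis dAB : [disjoint A & B].

Local Notation C := R[i].
Local Notation PC := (PC Phys).
Local Notation spliceV D := (splice (fun v : V => v \in D)).
Local Notation delta_on := (@delta_on R V Phys).
Local Notation op_on := (@op_on R V Phys).
Local Notation supported_on := (@supported_on R V Phys).

Let dBA : [disjoint B & A]. Proof. by rewrite disjoint_sym. Qed.
Let dRA : [disjoint ~: (A :|: B) & A].
Proof. by rewrite disjoint_sym disjoint_setC ?subsetUl. Qed.
Let dRB : [disjoint ~: (A :|: B) & B].
Proof. by rewrite disjoint_sym disjoint_setC ?subsetUr. Qed.

(* With a supported on A and b on B, this is a (x) b (x) identity. *)
Definition opAB (a b : PC -> PC -> C) (s s' : PC) : C :=
  a s s' * b s s' * delta_on (~: (A :|: B)) s s'.

Lemma op_id_opAB (s s' : PC) : op_id Phys s s' = opAB (delta_on A) (delta_on B) s s'.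
Proof.
rewrite op_id_delta_on -(setUCr (A :|: B)) !delta_onU //.
by rewrite disjoint_setC.
Qed.

Lemma ext_opA_opAB (s s' : PC) :
  ext_op Phys A oA s s' = opAB (op_on A oA) (delta_on B) s s'.
Proof.
by rewrite ext_op_delta_on (setC_disjointU dAB) delta_onU ?mulrA // disjoint_setC ?subsetUr.
Qed.

Lemma ext_opB_opAB (s s' : PC) :
  ext_op Phys B oB s s' = opAB (delta_on A) (op_on B oB) s s'.
Proof.
rewrite ext_op_delta_on (setC_disjointU dBA) (setUC B A) delta_onU 1?disjoint_setC ?subsetUl //.
by rewrite /opAB mulrCA mulrA.
Qed.

(* In the composition O_A O_B only the intermediate configuration that agrees
   with s' on A and with s elsewhere contributes. *)
Lemma op_mul_opAB (s s' : PC) :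
  op_mul Phys (ext_op Phys A oA) (ext_op Phys B oB) s s' =
  opAB (op_on A oA) (op_on B oB) s s'.
Proof.
rewrite /op_mul (bigD1 (spliceV A s' s)) //= big1 ?addr0 => [|u /dffun_neq [v]].
  have dCA : [disjoint ~: A & A] by rewrite disjoint_sym disjoint_setC.
  rewrite !ext_op_delta_on /op_on restr_splice_in restr_splice_out //.
  rewrite delta_onC delta_on_splice_out // delta_on_refl.
  rewrite (setC_disjointU dBA) (setUC B A) delta_onU 1?disjoint_setC ?subsetUl //.
  rewrite delta_on_splice_in delta_on_refl delta_on_splice_out //.
  by rewrite /opAB /op_on; ring.
rewrite /splice ffunE !ext_op_delta_on; case: ifP => vA uv.
  have vB : v \in ~: B by rewrite inE (disjointFr dAB vA).
  by rewrite (delta_on_eq0 vB uv) !mulr0.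
have vA' : v \in ~: A by rewrite inE vA.
by rewrite (delta_on_eq0 vA' (_ : s v != u v)) 1?eq_sym ?mulr0 ?mul0r.
Qed.

Lemma opAB_swapA a1 b1 a2 b2 :
  supported_on A a1 -> supported_on A a2 -> supported_on B b1 -> supported_on B b2 ->
  forall s s' t t' : PC, opAB a1 b1 s s' * opAB a2 b2 t t' =
    opAB a2 b1 (spliceV A t s) (spliceV A t' s') * opAB a1 b2 (spliceV A s t) (spliceV A s' t').
Proof.
move=> a1A a2A b1B b2B s s' t t'; rewrite /opAB a1A a2A.
rewrite !(supported_on_disjoint b1B dBA) !(supported_on_disjoint b2B dBA).
by rewrite !(supported_on_disjoint (delta_on_supported _) dRA); ring.
Qed.

Lemma opAB_swapB a1 b1 a2 b2 :
  supported_on A a1 -> supported_on A a2 -> supported_on B b1 -> supported_on B b2 ->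
  forall s s' t t' : PC, opAB a1 b1 s s' * opAB a2 b2 t t' =
    opAB a1 b2 (spliceV B t s) (spliceV B t' s') * opAB a2 b1 (spliceV B s t) (spliceV B s' t').
Proof.
move=> a1A a2A b1B b2B s s' t t'; rewrite /opAB b1B b2B.
rewrite !(supported_on_disjoint a1A dAB) !(supported_on_disjoint a2A dAB).
by rewrite !(supported_on_disjoint (delta_on_supported _) dRB); ring.
Qed.

End TwoRegions.

Section ComplexExp.
Context {R : realType}.
Local Notation C := R[i].

Lemma cexpD (x y : C) : cexp (x + y) = cexp x * cexp y.
Proof.
case: x => a b; case: y => c d; rewrite /cexp /= expRD cosD sinD.
by apply/eqP; rewrite eq_complex /=; apply/andP; split; apply/eqP; ring.
Qed.

Lemma cexp0 : cexp (0 : C) = 1.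
Proof. by rewrite /cexp /= expR0 cos0 sin0 mulr1 mulr0. Qed.

Lemma cexpNr (x : C) : cexp x * cexp (- x) = 1.
Proof. by rewrite -cexpD subrr cexp0. Qed.

Lemma cexp_neq0 (x : C) : cexp x != 0.
Proof. by apply: contra_neq (@oner_neq0 C) => x0; rewrite -(cexpNr x) x0 mul0r. Qed.

Lemma cexpB (x y : C) : cexp (x - y) = cexp x / cexp y.
Proof.
rewrite cexpD; congr (_ * _); apply: (mulfI (cexp_neq0 y)).
by rewrite cexpNr mulfV ?cexp_neq0.
Qed.

Lemma ccvgD {u v : nat -> C} {l m : C} :
  ccvg u l -> ccvg v m -> ccvg (fun n => u n + v n) (l + m).
Proof.
case: l m => [a b] [c d] [ua ub] [vc vd]; split.
  have -> : (fun n => complex.Re (u n + v n)) = fun n => complex.Re (u n) + complex.Re (v n).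
    by apply: boolp.funext => n; case: (u n); case: (v n).
  exact: cvgD.
have -> : (fun n => complex.Im (u n + v n)) = fun n => complex.Im (u n) + complex.Im (v n).
  by apply: boolp.funext => n; case: (u n); case: (v n).
exact: cvgD.
Qed.

Lemma ccvgN {u : nat -> C} {l : C} : ccvg u l -> ccvg (fun n => - u n) (- l).
Proof.
case: l => a b [ua ub]; split.
  have -> : (fun n => complex.Re (- u n)) = fun n => - complex.Re (u n).
    by apply: boolp.funext => n; case: (u n).
  exact: cvgN.
have -> : (fun n => complex.Im (- u n)) = fun n => - complex.Im (u n).
  by apply: boolp.funext => n; case: (u n).
exact: cvgN.
Qed.

Lemma ccvgB {u v : nat -> C} {l m : C} :
  ccvg u l -> ccvg v m -> ccvg (fun n => u n - v n) (l - m).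
Proof. by move=> ul vm; exact: (ccvgD ul (ccvgN vm)). Qed.

End ComplexExp.

Lemma vset0 {V E : finType} (src dst : E -> V) : vset src dst set0 = set0.
Proof. by apply/setP => v; rewrite !inE; apply/existsP => -[e]; rewrite inE. Qed.

Lemma vset_sub_csupp {V E : finType} (src dst : E -> V) (W : {ffun {set E} -> nat}) F :
  (0 < W F)%N -> vset src dst F \subset csupp src dst W.
Proof. exact: bigcup_sup. Qed.

Lemma eq_clweight {E : finType} {K : fieldType} {z1 z2 : {set E} -> K} {W : {ffun {set E} -> nat}} :
  (forall F, (0 < W F)%N -> z1 F = z2 F) -> clweight z1 W = clweight z2 W.
Proof.
by move=> z12; apply: eq_bigr => F _; case: (posnP (W F)) => [-> | /z12 ->]; rewrite ?expr0.
Qed.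

Section Correlator.
Variables (R : realType) (V E : finType) (src dst : E -> V)
  (Phys : V -> finType) (Bnd : E -> finType)
  (Aten : forall v : V, Phys v -> Lcfg src dst Bnd v -> R[i])
  (mu : forall e : E, bool -> Kb Bnd e -> R[i])
  (A B : {set V})
  (oA : LPC Phys A -> LPC Phys A -> R[i])
  (oB : LPC Phys B -> LPC Phys B -> R[i]).
Hypothesis dAB : [disjoint A & B].

Local Notation O0 := (@op_id R V Phys).
Local Notation OA := (ext_op Phys A oA).
Local Notation OB := (ext_op Phys B oB).
Local Notation OAB := (op_mul Phys OA OB).
Local Notation ZB := (ZBP src dst Phys Bnd Aten mu).
Local Notation ZL := (Zloop src dst Phys Bnd Aten mu).
Local Notation clterm := (clterm src dst Phys Bnd Aten mu).
Local Notation corr := (corr_term src dst Phys Bnd Aten mu OA OB).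
Local Notation conn := (conn_cl src dst A B).
Local Notation opAB := (opAB A B).
Local Notation expect := (expect src dst Phys Bnd Aten).
Local Notation CE := (cluster_expansion src dst Phys Bnd Aten mu A B).

Local Hint Resolve op_on_supported delta_on_supported : core.

Let nf0 s s' : O0 s s' = opAB (delta_on A) (delta_on B) s s'.
Proof. exact: op_id_opAB. Qed.
Let nfA s s' : OA s s' = opAB (op_on A oA) (delta_on B) s s'.
Proof. exact: ext_opA_opAB. Qed.
Let nfB s s' : OB s s' = opAB (delta_on A) (op_on B oB) s s'.
Proof. exact: ext_opB_opAB. Qed.
Let nfAB s s' : OAB s s' = opAB (op_on A oA) (op_on B oB) s s'.
Proof. exact: op_mul_opAB. Qed.

Lemma ZBP_mulAB : ZB OAB * ZB O0 = ZB OA * ZB OB.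
Proof.
apply: (Ztilde_swap B); first by rewrite vset0 disjoints_subset sub0set.
by move=> s s' t t'; rewrite nfAB nf0 nfA nfB; apply: opAB_swapB.
Qed.

Hypotheses (nz0 : ZB O0 != 0) (nzA : ZB OA != 0) (nzB : ZB OB != 0) (nzAB : ZB OAB != 0).

Lemma Zloop_disjointA F : [disjoint vset src dst F & A] ->
  ZL OAB F = ZL OB F /\ ZL OA F = ZL O0 F.
Proof.
move=> dFA; split; apply/eqP; rewrite /Zloop eqr_div //; apply/eqP;
  apply: (Ztilde_swap A) => // s s' t t';
  by rewrite ?nfAB ?nfA ?nfB ?nf0; apply: opAB_swapA.
Qed.

Lemma Zloop_disjointB F : [disjoint vset src dst F & B] ->
  ZL OAB F = ZL OA F /\ ZL OB F = ZL O0 F.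
Proof.
move=> dFB; split; apply/eqP; rewrite /Zloop eqr_div //; apply/eqP;
  apply: (Ztilde_swap B) => // s s' t t';
  by rewrite ?nfAB ?nfA ?nfB ?nf0; apply: opAB_swapB.
Qed.

Lemma corr_term_disjoint W :
  [disjoint csupp src dst W & A] || [disjoint csupp src dst W & B] -> corr W = 0.
Proof.
have dF F (D : {set V}) : [disjoint csupp src dst W & D] -> (0 < W F)%N -> [disjoint vset src dst F & D].
  by move=> dW /vset_sub_csupp/disjointWl; apply.
case/orP => /dF dW.
  rewrite /corr_term (eq_clweight (fun F h => (Zloop_disjointA _ (dW F h)).1)).
  rewrite (eq_clweight (fun F h => (Zloop_disjointA _ (dW F h)).2)); ring.
rewrite /corr_term (eq_clweight (fun F h => (Zloop_disjointB _ (dW F h)).1)).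
rewrite (eq_clweight (fun F h => (Zloop_disjointB _ (dW F h)).2)); ring.
Qed.

Lemma corr_termE W : corr W = clterm OAB W + clterm O0 W - clterm OA W - clterm OB W.
Proof. by rewrite /corr_term /Defs.clterm; ring. Qed.

Lemma psum_corr_term N :
  psum (conn_cl_AB src dst A B) corr N =
  psum conn (clterm OAB) N + psum conn (clterm O0) N
  - psum conn (clterm OA) N - psum conn (clterm OB) N.
Proof.
rewrite /psum -big_split -!sumrB /= [LHS]big_mkcond [RHS]big_mkcond.
apply: eq_bigr => W _; rewrite -corr_termE /conn_cl_AB.
case: (csize _ <= N)%N; case: (boolP (conn (cnat W))) => //= cW.
by case: ifP => // /negbT; rewrite negb_and !negbK => /corr_term_disjoint ->.
Qed.

Lemma connected_correlator : CE O0 -> CE OA -> CE OB -> CE OAB ->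
  exists T, ccvg (psum (conn_cl_AB src dst A B) corr) T /\
    expect OAB - expect OA * expect OB = expect OA * expect OB * (cexp T - 1).
Proof.
move=> [_ [S0 [c0 e0]]] [_ [SA [cA eA]]] [_ [SB [cB eB]]] [_ [SAB [cAB eAB]]].
exists (SAB + S0 - SA - SB); split.
  by rewrite (boolp.funext psum_corr_term); exact: ccvgB (ccvgB (ccvgD cAB c0) cA) cB.
rewrite /Defs.expect eAB eA eB e0 !cexpB cexpD.
have -> : ZB OAB = ZB OA * ZB OB / ZB O0 by rewrite -ZBP_mulAB mulfK.
by field; rewrite !cexp_neq0 nz0.
Qed.

End Correlator.

Theorem mainTheorem8 (R : realType) (V E : finType) (src dst : E -> V)
  (Phys : V -> finType) (Bnd : E -> finType)
  (Aten : forall v : V, Phys v -> Lcfg src dst Bnd v -> R[i])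
  (mu : forall e : E, bool -> Kb Bnd e -> R[i])
  (A B : {set V})
  (oA : LPC Phys A -> LPC Phys A -> R[i])
  (oB : LPC Phys B -> LPC Phys B -> R[i]) :
  let O0 := op_id Phys in
  let OA := ext_op Phys A oA in
  let OB := ext_op Phys B oB in
  let OAB := op_mul Phys OA OB in
  let Z := Znw src dst Phys Bnd Aten in
  let ZBP := ZBP src dst Phys Bnd Aten mu in
  let expect := expect src dst Phys Bnd Aten in
  let CE := cluster_expansion src dst Phys Bnd Aten mu A B in
  simple_graph src dst ->
  0 < Z O0 ->
  BP_fixed_point src dst Phys Bnd Aten mu ->
  [disjoint A & B] ->
  ZBP O0 != 0 -> ZBP OA != 0 -> ZBP OB != 0 -> ZBP OAB != 0 ->
  expect OA != 0 -> expect OB != 0 ->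
  CE O0 -> CE OA -> CE OB -> CE OAB ->
  exists T : R[i],
    ccvg (psum (conn_cl_AB src dst A B)
               (corr_term src dst Phys Bnd Aten mu OA OB)) T /\
    expect OAB - expect OA * expect OB
      = expect OA * expect OB * (cexp T - 1).
Proof.
move=> O0 OA OB OAB Z ZBP' expect' CE _ _ _ dAB nz0 nzA nzB nzAB _ _.
exact: connected_correlator.
Qed.
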